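(* Let $M$ be a duplicial module in a pre-additive category, and define the Connes operator $B_n=\sum_{i=0}^n d_n\kappa_n^i:M_n\to M_{n+1}$ for $n\ge0$ (and $B_{-1}=0$). Then for all $n\ge0$, $$b_{n+1}B_n+B_{n-1}b_n=1-\pi_n\qquad\text{and}\qquad B_{n+1}B_n=0 .$$
   Context: Let $\mathcal A$ be a pre-additive category. Let $\Lambda_+$ be the category with objects $[n]$, $n\ge0$, where $\Lambda_+([m],[n])$ is the set of weakly monotone $f:\mathbb Z\to\mathbb Z$ with $f(j+m+1)=f(j)+n+1$ for all $j$ and $f(0)\ge0$. Define $\varepsilon^n_i:[n-1]\to[n]$ ($n\ge1$, $0\le i\le n$) by $\varepsilon^n_i(j)=j$ for $0\le j<i$, $j+1$ for $i\le j\le n-1$, and $\eta^n_i:[n+1]\to[n]$ ($0\le i\le n+1$) by $\eta^n_i(j)=j$ for $0\le j\le i$, $j-1$ for $i<j\le n+1$. A duplicial module is a functor $M:\Lambda_+^{op}\to\mathcal A$; $M_n=M([n])$, $\partial_{n,i}=M(\varepsilon^n_i):M_n\to M_{n-1}$, $s_{n,i}=M(\eta^n_i):M_n\to M_{n+1}$. Convention $M_{-1}=0$, maps into/out of it zero. Define $b_n=\sum_{i=0}^n(-1)^i\partial_{n,i}$ ($b_0=0$), $d_n=\sum_{i=0}^{n+1}(-1)^is_{n,i}$, the Karoubi operator $\kappa_n=(-1)^n(\partial_{n+1,0}s_{n,n+1}-s_{n-1,n}\partial_{n,0})$ (so $\kappa_0=\partial_{1,0}s_{0,1}$), and the Dwyer–Kan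 operator $\pi_n=(-1)^n\partial_{n+1,0}\kappa_{n+1}^n s_{n,n+1}$. *)

From HB Require Import structures.
From mathcomp Require Import all_boot all_order all_algebra.
Set Implicit Arguments. Unset Strict Implicit. Unset Printing Implicit Defensive.
Import GRing.Theory.
Local Open Scope ring_scope.

Record preadditive := PreAdditive {
  Ob : Type;
  Hom : Ob -> Ob -> zmodType;
  hcomp : forall a b c : Ob, Hom b c -> Hom a b -> Hom a c;
  idm : forall a : Ob, Hom a a;
  compA : forall a b c d (f : Hom c d) (g : Hom b c) (h : Hom a b),
      hcomp f (hcomp g h) = hcomp (hcomp f g) h;
  comp1m : forall a b (f : Hom a b), hcomp (idm b) f = f;
  compm1 : forall a b (f : Hom a b), hcomp f (idm a) = f;
  compDl : forall a b c (f g : Hom b c) (h : Hom a b),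
      hcomp (f + g) h = hcomp f h + hcomp g h;
  compDr : forall a b c (f : Hom b c) (g h : Hom a b),
      hcomp f (g + h) = hcomp f g + hcomp f h
}.

Arguments hcomp {p a b c}.
Arguments idm {p}.

(* Morphisms [m] -> [n] of Lambda_+ : weakly monotone f : Z -> Z with
   f(j + m + 1) = f(j) + n + 1 and f(0) >= 0. *)
Definition in_Lambda (m n : nat) (f : int -> int) : Prop :=
  (forall j j' : int, j <= j' -> f j <= f j') /\
  (forall j : int, f (j + (m.+1)%:Z) = f j + (n.+1)%:Z) /\
  0 <= f 0.

(* A duplicial module: a functor Lambda_+^op -> A.  [Mmap m n f] is M(f) for
   f : [m] -> [n]  (its values on non-morphisms are irrelevant). *)
Record duplicial (A : preadditive) := Duplicial {
  Mob : nat -> Ob A;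
  Mmap : forall m n : nat, (int -> int) -> Hom (Mob n) (Mob m);
  Mmap_id : forall m : nat, Mmap m m (fun j => j) = idm (Mob m);
  Mmap_comp : forall (m n p : nat) (f g : int -> int),
      in_Lambda m n f -> in_Lambda n p g ->
      Mmap m p (g \o f) = hcomp (Mmap m n f) (Mmap n p g)
}.

(* Quasi-periodic extension to Z of a map given on {0,...,p-1}, with
   f(j + p) = f(j) + q. *)
Definition qext (p q : nat) (g : nat -> int) (j : int) : int :=
  (j %/ p%:Z)%Z * q%:Z + g `|(j %% p%:Z)%Z|%N.

(* epsL k i = epsilon^{k+1}_i : [k] -> [k+1] *)
Definition epsL (k i : nat) : int -> int :=
  qext k.+1 k.+2 (fun j => if (j < i)%N then j%:Z else j.+1%:Z).

Definition etaL (n i : nat) : int -> int :=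
  qext n.+2 n.+1 (fun j => if (j <= i)%N then j%:Z else j.-1%:Z).

Section Ops.
Variables (A : preadditive) (M : duplicial A).

Definition Mo := Mob M.

(* face k i = partial_{k+1,i} : M_{k+1} -> M_k *)
Definition face (k i : nat) : Hom (Mo k.+1) (Mo k) := Mmap M k k.+1 (epsL k i).

Definition degen (n i : nat) : Hom (Mo n) (Mo n.+1) := Mmap M n.+1 n (etaL n i).

Definition sgn (i : nat) : int := (-1) ^+ i.

(* bS k = b_{k+1} : M_{k+1} -> M_k   (b_0 = 0) *)
Definition bS (k : nat) : Hom (Mo k.+1) (Mo k) :=
  \sum_(i < k.+2) face k i *~ sgn i.

Definition dd (n : nat) : Hom (Mo n) (Mo n.+1) :=
  \sum_(i < n.+2) degen n i *~ sgn i.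

Definition kappa (n : nat) : Hom (Mo n) (Mo n) :=
  match n return Hom (Mo n) (Mo n) with
  | 0 => hcomp (face 0 0) (degen 0 1)
  | k.+1 => (hcomp (face k.+1 0) (degen k.+1 k.+2)
             - hcomp (degen k k.+1) (face k 0)) *~ sgn k.+1
  end.

Definition endo_pow (a : Ob A) (f : Hom a a) (k : nat) : Hom a a :=
  iter k (fun g => hcomp f g) (idm a).

Definition piDK (n : nat) : Hom (Mo n) (Mo n) :=
  hcomp (face n 0) (hcomp (endo_pow (kappa n.+1) n) (degen n n.+1)) *~ sgn n.

Definition connesB (n : nat) : Hom (Mo n) (Mo n.+1) :=
  \sum_(i < n.+1) hcomp (dd n) (endo_pow (kappa n) i).

(* B_{n-1} b_n, which is 0 for n = 0 (B_{-1} = 0, b_0 = 0) *)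
Definition Bb_low (n : nat) : Hom (Mo n) (Mo n) :=
  match n return Hom (Mo n) (Mo n) with
  | 0 => 0
  | k.+1 => hcomp (connesB k) (bS k)
  end.

End Ops.

From Pilot Require Import Defs.
From HB Require Import structures.
From mathcomp Require Import all_boot all_order all_algebra zify ring.
From Stdlib Require Import FunctionalExtensionality.
Import GRing.Theory Num.Theory Order.TTheory.
Local Open Scope ring_scope.

(* Write [K_n = (-1)^n kappa_n] ([kappaU n]); for [n > 0] it equals
   [t_n - s_{n-1,n} d_{n,0}], where [t_n = d_{n,0} s_{n,n+1}] ([tau n]).
   The simplicial identities between faces, degeneracies and [t], read off
   from the combinatorics of Lambda_+, give the homotopy formula
   [b d + d b = 1 - kappa] together with [d d = 0] and [b K = - K b]; hence
   [kappa] commutes with [b] and [d], and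
   [b B_n + B_{n-1} b = sum_(i < n) (1 - kappa) kappa^i + b d kappa^n
                      = 1 - kappa^n (1 - b d)].
   It remains to see [pi_n = kappa^n (1 - b d)], which rests on
   [K_{n+1}^n s_{n,j} = 0] for [j < n]: [K] shifts [s_j] to [s_{j-1}] and
   [K s_0 = 0].  [B B = 0] follows from [d d = 0] and [d kappa = kappa d]. *)

Local Notation Hom := Defs.Hom.
Local Notation hcompA := Defs.compA.

Lemma sgn0 : sgn 0 = 1. Proof. by []. Qed.

Lemma sgnS k : sgn k.+1 = - sgn k.
Proof. by rewrite /sgn exprS mulN1r. Qed.

Lemma sgn_eq1VN1 k : sgn k = 1 \/ sgn k = -1.
Proof. by rewrite /sgn -signr_odd; case: odd; [right | left]. Qed.

Lemma mulsgn_self k : sgn k * sgn k = 1.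
Proof. by rewrite /sgn -exprMn mulrNN mulr1 expr1n. Qed.

Lemma sgnS_exp_self n : sgn n.+1 ^+ n = 1.
Proof. by rewrite /sgn -exprM -signr_odd oddM /= andNb expr0. Qed.

Lemma sgn_exp_self n : sgn n ^+ n = sgn n.
Proof. by rewrite /sgn -exprM -[LHS]signr_odd oddM andbb signr_odd. Qed.

Section SignedMultiples.
Variable U : zmodType.

Lemma mulrz_sgn0 (x : U) : x *~ sgn 0 = x.
Proof. exact: mulr1z. Qed.

Lemma mulrz_sgnS (x : U) k : x *~ sgn k.+1 = - (x *~ sgn k).
Proof. by rewrite sgnS mulrNz. Qed.

Lemma mulrz_sgnK (x : U) k : x *~ sgn k *~ sgn k = x.
Proof. by rewrite -mulrzA mulsgn_self mulr1z. Qed.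

End SignedMultiples.

(* [abel] proves equalities in a zmodType between expressions built from atoms
   with [0], [+], [-] and integer multiples whose multipliers are polynomials
   in signs [sgn k]: both sides are reified and the coefficients of each atom
   are compared in [int], after case analysis on the value of every sign. *)

Inductive zexpr :=
  ZAtom of nat | ZZero | ZAdd of zexpr & zexpr | ZOpp of zexpr | ZMulz of zexpr & int.

Fixpoint zeval (U : zmodType) (env : seq U) (e : zexpr) : U :=
  match e with
  | ZAtom i => nth 0 env i
  | ZZero => 0
  | ZAdd a b => zeval U env a + zeval U env b
  | ZOpp a => - zeval U env a
  | ZMulz a z => zeval U env a *~ z
  end.

Arguments zeval {U}.

Fixpoint zcoef (e : zexpr) (k : nat) : int :=
  match e with
  | ZAtom i => if eqn i k then 1 else 0
  | ZZero => 0
  | ZAdd a b => zcoef a k + zcoef b k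
  | ZOpp a => - zcoef a k
  | ZMulz a z => zcoef a k * z
  end.

Fixpoint zsupport (e : zexpr) : nat :=
  match e with
  | ZAtom i => i.+1
  | ZZero => 0
  | ZAdd a b => maxn (zsupport a) (zsupport b)
  | ZOpp a => zsupport a
  | ZMulz a _ => zsupport a
  end.

Lemma zeval_sum {U : zmodType} (env : seq U) e N : (zsupport e <= N)%N ->
  zeval env e = \sum_(k < N) nth 0 env k *~ zcoef e k.
Proof.
elim: e N => [i||a IHa b IHb|a IHa|a IHa z] N /=.
- move=> iN; rewrite (bigD1 (Ordinal iN)) //= eqnE eqxx mulr1z big1 ?addr0 //.
  by move=> k /eqP ki; case: eqP => [ik|_]; [case: ki; apply: val_inj | rewrite mulr0z].
- by move=> _; rewrite big1 // => k _; rewrite mulr0z.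
- rewrite geq_max => /andP[ha hb]; rewrite (IHa N) // (IHb N) // -big_split /=.
  by apply: eq_bigr => k _; rewrite mulrzDr.
- by move=> h; rewrite (IHa N) // -sumrN; apply: eq_bigr => k _; rewrite mulrNz.
- move=> h; rewrite (IHa N) // (big_morph (fun x : U => x *~ z) (@mulrzDl U z) (@mul0rz U z)).
  by apply: eq_bigr => k _; rewrite mulrzA.
Qed.

Lemma zeval_eq_coef (U : zmodType) (env : seq U) e1 e2 :
  (forall k, zcoef e1 k = zcoef e2 k) -> zeval env e1 = zeval env e2.
Proof.
move=> eq_coef.
rewrite (zeval_sum env _ _ (leq_maxl (zsupport e1) (zsupport e2))).
rewrite (zeval_sum env _ _ (leq_maxr (zsupport e1) (zsupport e2))).
by apply: eq_bigr => k _; rewrite eq_coef.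
Qed.

Ltac sign_ring := rewrite ?sgnS ?sgn0;
  repeat (match goal with |- context [sgn ?k] => case: (sgn_eq1VN1 k) => -> end); ring.

Ltac zatoms_add x l :=
  lazymatch l with
  | nil => constr:(x :: nil)
  | x :: _ => l
  | ?y :: ?r => let r' := zatoms_add x r in constr:(y :: r')
  end.

Ltac zatoms t l :=
  lazymatch t with
  | ?a + ?b => let l1 := zatoms a l in zatoms b l1
  | - ?a => zatoms a l
  | ?a *~ _ => zatoms a l
  | 0 => l
  | _ => zatoms_add t l
  end.

Ltac zatom_index x l :=
  lazymatch l with
  | x :: _ => constr:(0%N)
  | _ :: ?r => let i := zatom_index x r in constr:(i.+1)
  end.

Ltac zreify t l :=
  lazymatch t with
  | ?a + ?b => let ra := zreify a l in let rb := zreify b l in constr:(ZAdd ra rb)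
  | - ?a => let ra := zreify a l in constr:(ZOpp ra)
  | ?a *~ ?z => let ra := zreify a l in constr:(ZMulz ra z)
  | 0 => constr:(ZZero)
  | _ => let i := zatom_index t l in constr:(ZAtom i)
  end.

Ltac zcoef_cases k n :=
  lazymatch n with
  | O => cbv beta iota delta [zcoef eqn]; sign_ring
  | S ?n' => destruct k as [|k]; [cbv beta iota delta [zcoef eqn]; sign_ring | zcoef_cases k n']
  end.

Ltac abel :=
  lazymatch goal with
  | |- @eq ?T ?x ?y =>
    let l := zatoms x (@nil T) in
    let l := zatoms y l in
    let e1 := zreify x l in
    let e2 := zreify y l in
    let n := eval compute in (size l) in
    change (zeval l e1 = zeval l e2); apply: zeval_eq_coef;
    let k := fresh "k" in intro k; zcoef_cases k n
  end.

(** * Morphisms of Lambda_+ as quasi-periodic extensions *)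

Lemma qext_shift p q g (x k : int) : (0 < p)%N ->
  qext p q g (x + k * p%:Z) = qext p q g x + k * q%:Z.
Proof.
move=> p_gt0; have pz_neq0 : p%:Z != 0 by rewrite eqz_nat -lt0n.
rewrite /qext (addrC x) divzMDl // modzMDl mulrDl; lia.
Qed.

Lemma qext_small p q g (y : nat) : (y < p)%N -> qext p q g y = g y.
Proof.
by move=> yp; rewrite /qext divz_small ?modz_small ?mul0r ?add0r //; apply/andP.
Qed.

Lemma qext_nat p q g (y : nat) : (0 < p)%N -> (y <= p)%N ->
  qext p q g y = if (y < p)%N then g y else q%:Z + g 0%N.
Proof.
move=> p_gt0; case: ifP => [yp _|/negbT]; first exact: qext_small.
rewrite -leqNgt => py yp; have -> : y = p by apply/eqP; rewrite eqn_leq yp py.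
have -> : Posz p = 0 + 1 * p%:Z by rewrite mul1r add0r.
by rewrite qext_shift // mul1r addrC qext_small.
Qed.

Lemma absz_modz_lt (j : int) (r : nat) : (0 < r)%N -> (`|(j %% r%:Z)%Z|%N < r)%N.
Proof.
move=> r_gt0; have rz_neq0 : r%:Z != 0 by rewrite eqz_nat -lt0n.
have := modz_ge0 j rz_neq0; have : (j %% r%:Z)%Z < r%:Z by apply: ltz_pmod.
lia.
Qed.

Lemma divz_modz_nat (j : int) {r : nat} : (0 < r)%N ->
  j = (j %/ r%:Z)%Z * r%:Z + Posz `|(j %% r%:Z)%Z|%N.
Proof.
move=> r_gt0; have rz_neq0 : r%:Z != 0 by rewrite eqz_nat -lt0n.
by rewrite abszE ger0_norm ?modz_ge0 //; exact: divz_eq.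
Qed.

Lemma qext_divmod p q g (a : int) (y : nat) : (y < p)%N ->
  qext p q g (a * p%:Z + y) = a * q%:Z + g y.
Proof.
move=> yp; have p_gt0 : (0 < p)%N by apply: leq_ltn_trans yp.
by rewrite addrC qext_shift // qext_small // addrC.
Qed.

Lemma qext_comp p q r g h : (0 < p)%N ->
  qext p q g \o qext r p h = qext r q (fun i => qext p q g (h i)).
Proof.
move=> p_gt0; apply: functional_extensionality => j /=.
by rewrite [qext r p h j]/qext (addrC _ (h _)) qext_shift // addrC [RHS]/qext.
Qed.

Lemma eq_qext r q g1 g2 : (0 < r)%N -> (forall i, (i < r)%N -> g1 i = g2 i) ->
  qext r q g1 = qext r q g2.
Proof.
move=> r_gt0 eq_g; apply: functional_extensionality => j.
by rewrite /qext eq_g // absz_modz_lt.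
Qed.

Lemma qext_id r g : (0 < r)%N -> (forall i, (i < r)%N -> g i = i%:Z) ->
  qext r r g = (fun j => j).
Proof.
move=> r_gt0 g_id; rewrite (@eq_qext _ _ _ (fun i => Posz i) r_gt0 g_id).
by apply: functional_extensionality => j; rewrite /qext -divz_modz_nat.
Qed.

Lemma int_homo_leq (F : int -> int) : (forall j, F j <= F (j + 1)) ->
  forall j j', j <= j' -> F j <= F j'.
Proof.
move=> F_step j j' le_jj'.
have [k ->] : exists k : nat, j' = j + k%:Z by exists `|j' - j|%N; lia.
elim: k => [|k IHk]; first by rewrite addr0.
by apply: le_trans IHk _; rewrite -[k.+1]addn1 PoszD addrA.
Qed.

Lemma in_Lambda_qext m n g :
  (forall a b : nat, (a <= b <= m)%N -> g a <= g b) ->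
  g m <= n.+1%:Z + g 0%N -> 0 <= g 0%N ->
  in_Lambda m n (qext m.+1 n.+1 g).
Proof.
move=> g_homo g_wrap g0_ge0; split; [|split].
- apply: int_homo_leq => j; rewrite [j](divz_modz_nat j (ltn0Sn m)).
  set a := (j %/ _)%Z; set r := `|_|%N.
  have r_lt : (r < m.+1)%N by apply: absz_modz_lt.
  rewrite qext_divmod //; have [r_ltm|r_eqm] := ltnP r m.
    have -> : a * m.+1%:Z + Posz r + 1 = a * m.+1%:Z + Posz r.+1 by lia.
    by rewrite qext_divmod // lerD2l g_homo // leqnSn.
  have -> : a * m.+1%:Z + Posz r + 1 = (a + 1) * m.+1%:Z + Posz 0 by lia.
  by rewrite qext_divmod // mulrDl mul1r -addrA lerD2l (_ : r = m) //; lia.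
- move=> j; have -> : j + m.+1%:Z = j + 1 * m.+1%:Z by rewrite mul1r.
  by rewrite qext_shift // mul1r.
- by rewrite qext_small.
Qed.

Definition shiftL (n : nat) : int -> int := qext n.+1 n.+1 (fun j => j.+1%:Z).

Lemma epsL_in_Lambda k i : in_Lambda k k.+1 (epsL k i).
Proof.
apply: in_Lambda_qext => [a b /andP[ab bm]||]; rewrite /=;
  repeat case: ifP => [?|/negbT ?]; lia.
Qed.

Lemma etaL_in_Lambda n i : in_Lambda n.+1 n (etaL n i).
Proof.
apply: in_Lambda_qext => [a b /andP[ab bm]||]; rewrite /=;
  repeat case: ifP => [?|/negbT ?]; lia.
Qed.

Lemma shiftL_in_Lambda n : in_Lambda n n (shiftL n).
Proof. by apply: in_Lambda_qext => [a b /andP[ab bm]||]; lia. Qed.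

#[local] Hint Resolve epsL_in_Lambda etaL_in_Lambda shiftL_in_Lambda : core.

(* Closes [qext p q g1 x = qext p q g2 x] for [x < p] by evaluating every
   nested [qext] at a natural argument and splitting all the cases. *)
Ltac qext_cases :=
  repeat (first [ progress (rewrite qext_nat; [|by []|lia]); cbv beta
                | progress (rewrite ?leq0n ?ltn0 ?ltn0Sn); cbv iota beta
                | let H := fresh "H" in case: ifP => H; try move/negbT in H; cbv beta ]);
  try lia.

Section Preadditive.
Variable A : preadditive.
Implicit Types a b c : Ob A.

Definition hcompl {a b c} (f : Hom b c) : Hom a b -> Hom a c := hcomp f.
Definition hcompr {a b c} (g : Hom a b) : Hom b c -> Hom a c := hcomp^~ g.

Lemma hcompl_nmod_morphism a b c (f : Hom b c) : nmod_morphism (@hcompl a b c f).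
Proof.
split; last exact: compDr.
by apply: (addrI (hcomp f 0)); rewrite -compDr !addr0.
Qed.

Lemma hcompr_nmod_morphism a b c (g : Hom a b) : nmod_morphism (@hcompr a b c g).
Proof.
split=> [|x y]; last exact: compDl.
by apply: (addrI (hcomp 0 g)); rewrite /hcompr -compDl !addr0.
Qed.

HB.instance Definition _ a b c f :=
  GRing.isNmodMorphism.Build _ _ (@hcompl a b c f) (@hcompl_nmod_morphism a b c f).
HB.instance Definition _ a b c g :=
  GRing.isNmodMorphism.Build _ _ (@hcompr a b c g) (@hcompr_nmod_morphism a b c g).

Section Laws.
Variables (a b c : Ob A).
Implicit Types (f : Hom b c) (g : Hom a b).

Lemma hcomp0r f : hcomp f (0 : Hom a b) = 0. Proof. exact: (raddf0 (hcompl f)). Qed.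
Lemma hcomp0l g : hcomp (0 : Hom b c) g = 0. Proof. exact: (raddf0 (hcompr g)). Qed.
Lemma hcompNr f g : hcomp f (- g) = - hcomp f g. Proof. exact: (raddfN (hcompl f)). Qed.
Lemma hcompNl f g : hcomp (- f) g = - hcomp f g. Proof. exact: (raddfN (hcompr g)). Qed.
Lemma hcompBr f g1 g2 : hcomp f (g1 - g2) = hcomp f g1 - hcomp f g2.
Proof. exact: (raddfB (hcompl f)). Qed.
Lemma hcompBl f1 f2 g : hcomp (f1 - f2) g = hcomp f1 g - hcomp f2 g.
Proof. exact: (raddfB (hcompr g)). Qed.
Lemma hcompzr f g z : hcomp f (g *~ z) = hcomp f g *~ z.
Proof. exact: (raddfMz (hcompl f)). Qed.
Lemma hcompzl f g z : hcomp (f *~ z) g = hcomp f g *~ z.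
Proof. exact: (raddfMz (hcompr g)). Qed.

Lemma hcomp_sumr f I r (P : pred I) (F : I -> Hom a b) :
  hcomp f (\sum_(i <- r | P i) F i) = \sum_(i <- r | P i) hcomp f (F i).
Proof. exact: (raddf_sum (hcompl f)). Qed.

Lemma hcomp_suml g I r (P : pred I) (F : I -> Hom b c) :
  hcomp (\sum_(i <- r | P i) F i) g = \sum_(i <- r | P i) hcomp (F i) g.
Proof. exact: (raddf_sum (hcompr g)). Qed.

End Laws.

Lemma endo_powD a (f : Hom a a) i j :
  endo_pow f (i + j) = hcomp (endo_pow f i) (endo_pow f j).
Proof.
elim: i => [|i IHi]; first by rewrite add0n /= comp1m.
by rewrite addSn /= IHi hcompA.
Qed.

Lemma endo_powS a (f : Hom a a) i : endo_pow f i.+1 = hcomp f (endo_pow f i).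
Proof. by []. Qed.

Lemma endo_powSr a (f : Hom a a) i : endo_pow f i.+1 = hcomp (endo_pow f i) f.
Proof. by rewrite -addn1 endo_powD /= compm1. Qed.

Lemma endo_powMz a (f : Hom a a) z i : endo_pow (f *~ z) i = endo_pow f i *~ (z ^+ i).
Proof.
elim: i => [|i IHi]; first by rewrite /= mulr1z.
by rewrite /= IHi hcompzr hcompzl -mulrzA exprS mulrC.
Qed.

Lemma sum_endo_pow_telescope a (f : Hom a a) k :
  \sum_(i < k) hcomp (idm a - f) (endo_pow f i) = idm a - endo_pow f k.
Proof.
elim: k => [|k IHk]; first by rewrite big_ord0 /= subrr.
rewrite big_ord_recr /= IHk hcompBl comp1m; abel.
Qed.

End Preadditive.

Ltac hcomp_expand := rewrite ?compDl ?compDr ?hcompzl ?hcompzr ?hcompBl ?hcompBr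
  ?hcompNl ?hcompNr ?hcomp0l ?hcomp0r.

(** * Simplicial identities of a duplicial module *)

Section Duplicial.
Variables (A : preadditive) (M : duplicial A).

Definition tau n : Hom (Mo M n) (Mo M n) := hcomp (face M n 0) (degen M n n.+1).

Lemma tau_shiftL n : tau n = Mmap M n n (shiftL n).
Proof.
rewrite /tau /face /degen -Mmap_comp //; congr Mmap.
by rewrite /epsL /etaL /shiftL qext_comp //; apply: eq_qext => // x x_lt; qext_cases.
Qed.

Ltac lambda_rel := rewrite /face /degen ?tau_shiftL -!Mmap_comp // -?(Mmap_id M);
  congr Mmap; rewrite /epsL /etaL /shiftL !qext_comp //;
  first [apply: qext_id | apply: eq_qext] => // x x_lt; qext_cases.

Lemma face_degen_id n j : (j <= n.+1)%N -> hcomp (face M n j) (degen M n j) = idm (Mo M n).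
Proof. by move=> j_le; lambda_rel. Qed.

Lemma face_succ_degen_id n j : (j <= n)%N -> hcomp (face M n j.+1) (degen M n j) = idm (Mo M n).
Proof. by move=> j_le; lambda_rel. Qed.

Lemma face_degen_lt m i j : (i < j)%N -> (j <= m.+2)%N -> ~~ ((i == 0%N) && (j == m.+2)) ->
  hcomp (face M m.+1 i) (degen M m.+1 j) = hcomp (degen M m j.-1) (face M m i).
Proof. by move=> ij j_le not_tau; lambda_rel. Qed.

Lemma face_degen_gt m i j : (j.+1 < i)%N -> (i <= m.+2)%N ->
  hcomp (face M m.+1 i) (degen M m.+1 j) = hcomp (degen M m j) (face M m i.-1).
Proof. by move=> ji i_le; lambda_rel. Qed.

Lemma degen_degen n i j : (i <= j)%N -> (j <= n.+1)%N ->
  hcomp (degen M n.+1 i) (degen M n j) = hcomp (degen M n.+1 j.+1) (degen M n i).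
Proof. by move=> ij j_le; lambda_rel. Qed.

Lemma face_face m i j : (i < j)%N -> (j <= m.+2)%N ->
  hcomp (face M m i) (face M m.+1 j) = hcomp (face M m j.-1) (face M m.+1 i).
Proof. by move=> ij j_le; lambda_rel. Qed.

Lemma face_tau n i : (i <= n)%N -> hcomp (face M n i) (tau n.+1) = hcomp (tau n) (face M n i.+1).
Proof. by move=> i_le; lambda_rel. Qed.

Lemma face_last_tau n : hcomp (face M n n.+1) (tau n.+1) = face M n 0.
Proof. by lambda_rel. Qed.

Lemma tau_degen0 n : hcomp (tau n.+1) (degen M n 0) = degen M n n.+1.
Proof. by lambda_rel. Qed.

Lemma tau_degenS n j : (j <= n)%N -> hcomp (tau n.+1) (degen M n j.+1) = hcomp (degen M n j) (tau n).
Proof. by move=> j_le; lambda_rel. Qed.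

Definition bpart m k : Hom (Mo M m.+1) (Mo M m) := \sum_(i < k) face M m i *~ sgn i.
Definition dpart n k : Hom (Mo M n) (Mo M n.+1) := \sum_(i < k) degen M n i *~ sgn i.

Lemma bS_bpart m : bS M m = bpart m m.+2. Proof. by []. Qed.
Lemma dd_dpart n : dd M n = dpart n n.+2. Proof. by []. Qed.

Lemma bpart0 m : bpart m 0 = 0. Proof. exact: big_ord0. Qed.
Lemma bpartS m k : bpart m k.+1 = bpart m k + face M m k *~ sgn k.
Proof. exact: big_ord_recr. Qed.
Lemma bpart1 m : bpart m 1 = face M m 0.
Proof. by rewrite bpartS bpart0 add0r mulrz_sgn0. Qed.
Lemma dpart0 n : dpart n 0 = 0. Proof. exact: big_ord0. Qed.
Lemma dpartS n k : dpart n k.+1 = dpart n k + degen M n k *~ sgn k.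
Proof. exact: big_ord_recr. Qed.

Definition kappaU n : Hom (Mo M n) (Mo M n) :=
  match n return Hom (Mo M n) (Mo M n) with
  | 0 => tau 0
  | m.+1 => tau m.+1 - hcomp (degen M m m.+1) (face M m 0)
  end.

Lemma kappa_sgn n : kappa M n = kappaU n *~ sgn n.
Proof. by case: n => [|n] //=; rewrite mulrz_sgn0. Qed.

(** * The homotopy formula [b d + d b = 1 - kappa] *)

Lemma bpart_degen_low m j k : (k <= j)%N -> (j <= m.+1)%N ->
  hcomp (bpart m.+1 k) (degen M m.+1 j) = hcomp (degen M m j.-1) (bpart m k).
Proof.
move=> + j_le; elim: k => [|k IHk] k_le; first by rewrite !bpart0 hcomp0l hcomp0r.
rewrite !bpartS; hcomp_expand; rewrite IHk ?(ltnW k_le) // face_degen_lt //; lia.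
Qed.

Lemma bpart_degen m j l : (j <= m.+1)%N -> (j.+2 + l <= m.+3)%N ->
  hcomp (bpart m.+1 (j.+2 + l)) (degen M m.+1 j) =
  hcomp (degen M m j.-1) (bpart m j) - hcomp (degen M m j) (bpart m (j.+1 + l) - bpart m j.+1).
Proof.
move=> j_le; elim: l => [|l IHl] l_le.
  rewrite !addn0 subrr hcomp0r subr0 !bpartS; hcomp_expand.
  by rewrite bpart_degen_low // face_degen_id ?face_succ_degen_id //; [abel | lia].
rewrite addnS bpartS compDl IHl; last lia.
rewrite hcompzl face_degen_gt; [|lia|lia].
rewrite !addSn /= addnS [bpart m (j + l).+2]bpartS; hcomp_expand; abel.
Qed.

Lemma bpart_degen_last m l : (l <= m.+1)%N ->
  hcomp (bpart m.+1 l.+1) (degen M m.+1 m.+2) =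
  tau m.+1 + hcomp (degen M m m.+1) (bpart m l.+1 - face M m 0).
Proof.
elim: l => [|l IHl] l_le; first by rewrite !bpart1 subrr hcomp0r addr0.
rewrite bpartS compDl IHl ?(ltnW l_le) // hcompzl (@face_degen_lt m l.+1 m.+2) //=.
rewrite [bpart m l.+2]bpartS; hcomp_expand; abel.
Qed.

Lemma bS_degen_add m j : (j <= m.+1)%N ->
  hcomp (bS M m.+1) (degen M m.+1 j) + hcomp (degen M m j) (bS M m) =
  hcomp (degen M m j.-1) (bpart m j) + hcomp (degen M m j) (bpart m j.+1).
Proof.
move=> j_le; rewrite !bS_bpart.
rewrite [X in bpart _ X](_ : _ = j.+2 + (m.+1 - j))%N; last lia.
rewrite [X in bpart m X](_ : _ = j.+1 + (m.+1 - j))%N; last lia.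
rewrite bpart_degen //; last lia.
hcomp_expand; abel.
Qed.

(* The sum telescopes over the degeneracies [s_0, ..., s_l]. *)
Lemma bS_dpart_add m l : (l <= m.+1)%N ->
  hcomp (bS M m.+1) (dpart m.+1 l.+1) + hcomp (dpart m l.+1) (bS M m) =
  hcomp (degen M m l) (bpart m l.+1) *~ sgn l.
Proof.
elim: l => [|l IHl] l_le.
  have := @bS_degen_add m 0 isT; rewrite bpart0 hcomp0r add0r => <-.
  rewrite !dpartS !dpart0 !add0r; hcomp_expand; abel.
rewrite dpartS [dpart m l.+2]dpartS; hcomp_expand.
rewrite addrACA IHl ?(ltnW l_le) // -mulrzDl bS_degen_add //=; hcomp_expand; abel.
Qed.

Lemma bd0 : hcomp (bS M 0) (dd M 0) = idm _ - kappa M 0.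
Proof.
rewrite bS_bpart dd_dpart !bpartS !dpartS bpart0 dpart0; hcomp_expand.
rewrite !face_degen_id // face_succ_degen_id // kappa_sgn /= /tau; abel.
Qed.

Lemma bd_add_db m :
  hcomp (bS M m.+1) (dd M m.+1) + hcomp (dd M m) (bS M m) = idm _ - kappa M m.+1.
Proof.
have b_degen_last : hcomp (bS M m.+1) (degen M m.+1 m.+2) =
    tau m.+1 + hcomp (degen M m m.+1) (bS M m - face M m 0) + idm _ *~ sgn m.+2.
  by rewrite bS_bpart bpartS compDl bpart_degen_last // hcompzl face_degen_id.
rewrite !dd_dpart [dpart m.+1 _]dpartS compDr addrAC bS_dpart_add //.
rewrite -bS_bpart hcompzr b_degen_last kappa_sgn /=; hcomp_expand; abel.
Qed.

(** * Commutation with the Karoubi operator *)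

Lemma degen_dpart n j k : (k <= j)%N -> (j <= n.+1)%N ->
  hcomp (degen M n.+1 j.+1) (dpart n k) = hcomp (dpart n.+1 k) (degen M n j).
Proof.
move=> + j_le; elim: k => [|k IHk] k_le; first by rewrite !dpart0 hcomp0r hcomp0l.
rewrite !dpartS; hcomp_expand; rewrite IHk ?(ltnW k_le) // (@degen_degen n k j) //; exact: ltnW.
Qed.

Lemma dpart_dpart n k : (k <= n.+2)%N -> hcomp (dpart n.+1 k.+1) (dpart n k) = 0.
Proof.
elim: k => [|k IHk] k_le; first by rewrite dpart0 hcomp0r.
rewrite [dpart n.+1 k.+2]dpartS [dpart n k.+1]dpartS; hcomp_expand.
rewrite IHk ?(ltnW k_le) // degen_dpart // [dpart n.+1 k.+1]dpartS; hcomp_expand.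
rewrite (@degen_degen n k k) //; abel.
Qed.

Lemma dd_dd n : hcomp (dd M n.+1) (dd M n) = 0.
Proof. exact: dpart_dpart. Qed.

Lemma dd_kappa n : hcomp (dd M n) (kappa M n) = hcomp (kappa M n.+1) (dd M n).
Proof.
have kappaSE k :
    kappa M k.+1 = idm _ - hcomp (bS M k.+1) (dd M k.+1) - hcomp (dd M k) (bS M k).
  by rewrite -addrA -opprD bd_add_db; abel.
rewrite kappaSE; hcomp_expand; rewrite -!hcompA dd_dd hcomp0r comp1m.
case: n => [|m].
  have -> : kappa M 0 = idm _ - hcomp (bS M 0) (dd M 0) by rewrite bd0; abel.
  by hcomp_expand; rewrite compm1; abel.
rewrite kappaSE; hcomp_expand.
rewrite compm1 [hcomp (dd M m.+1) (hcomp (dd M m) _)]hcompA dd_dd hcomp0l; abel.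
Qed.

Lemma dd_kappa_pow n i :
  hcomp (dd M n) (endo_pow (kappa M n) i) = hcomp (endo_pow (kappa M n.+1) i) (dd M n).
Proof.
elim: i => [|i IHi]; first by rewrite /= comp1m compm1.
by rewrite !endo_powS hcompA dd_kappa -hcompA IHi hcompA.
Qed.

Lemma face0_kappaU m :
  hcomp (face M m 0) (kappaU m.+1) = hcomp (kappaU m) (face M m 1 - face M m 0).
Proof.
rewrite /kappaU -/kappaU; hcomp_expand; rewrite face_tau // hcompA -/(tau m).
case: m => [|m]; first by abel.
rewrite /kappaU; hcomp_expand; rewrite -!hcompA (@face_face m 0 1) //=; abel.
Qed.

Lemma face_kappaU m i : (1 <= i)%N -> (i <= m.+1)%N ->
  hcomp (face M m.+1 i) (kappaU m.+2) = hcomp (kappaU m.+1) (face M m.+1 i.+1).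
Proof.
move=> i_ge1 i_le; rewrite /kappaU; hcomp_expand.
rewrite face_tau // hcompA face_degen_lt //=; last lia.
rewrite -!hcompA (@face_face m 0 i.+1) //=; abel.
Qed.

Lemma face_last_kappaU m : hcomp (face M m m.+1) (kappaU m.+1) = 0.
Proof.
by rewrite /kappaU; hcomp_expand; rewrite face_last_tau hcompA face_degen_id // comp1m subrr.
Qed.

Lemma bpart_kappaU m k : (k <= m)%N ->
  hcomp (bpart m k.+1) (kappaU m.+1) = - hcomp (kappaU m) (bpart m k.+2).
Proof.
elim: k => [|k IHk] k_le.
  rewrite bpart1 face0_kappaU [bpart m 2]bpartS bpart1; hcomp_expand; abel.
rewrite [bpart m k.+2]bpartS compDl IHk ?(ltnW k_le) // hcompzl.
case: m k_le IHk => [|m] k_le IHk //.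
rewrite face_kappaU // [bpart m.+1 k.+3]bpartS; hcomp_expand; abel.
Qed.

Lemma bS_kappaU m : hcomp (bS M m) (kappaU m.+1) = - hcomp (kappaU m) (bS M m).
Proof.
rewrite !bS_bpart [bpart m m.+2 in LHS]bpartS compDl hcompzl face_last_kappaU.
by rewrite bpart_kappaU // mul0rz addr0.
Qed.

Lemma bpart_kappaU_pow m j k : (j + k <= m.+1)%N ->
  hcomp (bpart m j.+1) (endo_pow (kappaU m.+1) k) =
  hcomp (endo_pow (kappaU m) k) (bpart m (j + k).+1) *~ sgn k.
Proof.
elim: k j => [|k IHk] j jk_le; first by rewrite /= comp1m compm1 addn0 mulrz_sgn0.
rewrite !endo_powS hcompA bpart_kappaU; last lia.
rewrite hcompNl -hcompA IHk; last lia.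
by rewrite hcompzr hcompA addnS addSn mulrz_sgnS.
Qed.

Lemma bS_kappaU_pow m k :
  hcomp (bS M m) (endo_pow (kappaU m.+1) k) = hcomp (endo_pow (kappaU m) k) (bS M m) *~ sgn k.
Proof.
elim: k => [|k IHk]; first by rewrite /= comp1m compm1 mulrz_sgn0.
rewrite !endo_powSr hcompA IHk hcompzl -hcompA bS_kappaU hcompNr hcompA.
by rewrite mulrz_sgnS mulNrz.
Qed.

Lemma bS_kappa_pow m k :
  hcomp (bS M m) (endo_pow (kappa M m.+1) k) = hcomp (endo_pow (kappa M m) k) (bS M m).
Proof.
rewrite !kappa_sgn !endo_powMz hcompzr hcompzl bS_kappaU_pow -mulrzA sgnS exprNn.
by rewrite -/(sgn k) mulrA mulsgn_self mul1r.
Qed.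

(** * The Dwyer-Kan and Connes operators *)

Lemma kappaU_degen0 n : hcomp (kappaU n.+1) (degen M n 0) = 0.
Proof.
by rewrite /kappaU; hcomp_expand; rewrite tau_degen0 -hcompA face_degen_id // compm1 subrr.
Qed.

Lemma kappaU_degenS n i : (i <= n)%N ->
  hcomp (kappaU n.+2) (degen M n.+1 i.+1) = hcomp (degen M n.+1 i) (kappaU n.+1).
Proof.
move=> i_le.
have face0_degen : hcomp (face M n.+1 0) (degen M n.+1 i.+1) = hcomp (degen M n i) (face M n 0).
  by rewrite face_degen_lt //; lia.
have degen_degen_last :
    hcomp (degen M n.+1 i) (degen M n n.+1) = hcomp (degen M n.+1 n.+2) (degen M n i).
  by rewrite degen_degen //; lia.
rewrite /kappaU; hcomp_expand; rewrite tau_degenS ?(leqW i_le) //.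
by rewrite -hcompA face0_degen hcompA -degen_degen_last -hcompA.
Qed.

Lemma kappaU_pow_degen n k i : (k <= i)%N -> (i <= n.+1)%N ->
  hcomp (endo_pow (kappaU n.+2) k) (degen M n.+1 i) =
  hcomp (degen M n.+1 (i - k)) (endo_pow (kappaU n.+1) k).
Proof.
move=> + i_le; elim: k => [|k IHk] k_le; first by rewrite /= comp1m compm1 subn0.
rewrite !endo_powS -hcompA IHk ?(ltnW k_le) // hcompA.
rewrite (_ : i - k = (i - k.+1).+1)%N ?kappaU_degenS ?hcompA //; lia.
Qed.

(* [K^(n+1) s_j = K^(n-j) (K s_0) K^j] and [K s_0 = 0]. *)
Lemma kappaU_pow_degen_eq0 n j : (j < n.+1)%N ->
  hcomp (endo_pow (kappaU n.+2) n.+1) (degen M n.+1 j) = 0.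
Proof.
move=> j_lt; have -> : endo_pow (kappaU n.+2) n.+1 =
    hcomp (endo_pow (kappaU n.+2) (n - j)) (endo_pow (kappaU n.+2) j.+1).
  by rewrite -endo_powD; congr endo_pow; lia.
rewrite endo_powS -!hcompA kappaU_pow_degen ?(ltnW j_lt) // subnn.
by rewrite [hcomp (kappaU n.+2) _]hcompA kappaU_degen0 hcomp0l hcomp0r.
Qed.

Lemma bS_degen0 m :
  hcomp (bS M m.+1) (degen M m.+1 0) = - hcomp (degen M m 0) (bS M m - face M m 0).
Proof.
by rewrite !bS_bpart (@bpart_degen m 0 m.+1) // bpart0 hcomp0r bpart1 sub0r.
Qed.

Lemma bS_sub_face0_kappaU_pow m :
  hcomp (bS M m - face M m 0) (endo_pow (kappaU m.+1) m.+1) = 0.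
Proof.
by rewrite hcompBl -bpart1 bpart_kappaU_pow // bS_kappaU_pow -bS_bpart subrr.
Qed.

Lemma piDK_kappaU n :
  piDK M n = hcomp (endo_pow (kappaU n) n) (hcomp (bS M n) (degen M n n.+1) + idm _ *~ sgn n).
Proof.
rewrite /piDK kappa_sgn endo_powMz sgnS_exp_self mulr1z hcompA -bpart1.
rewrite (@bpart_kappaU_pow n 0 n) // hcompzl mulrz_sgnK -hcompA; congr hcomp.
by rewrite add0n bS_bpart [bpart n n.+2]bpartS; hcomp_expand; rewrite face_degen_id //; abel.
Qed.

Lemma kappaU_pow_bS_dpart m :
  hcomp (endo_pow (kappaU m.+1) m.+1) (hcomp (bS M m.+1) (dpart m.+1 m.+2)) = 0.
Proof.
have K_dpart : hcomp (endo_pow (kappaU m.+2) m.+1) (dpart m.+1 m.+1) = 0.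
  rewrite /dpart hcomp_sumr big1 // => j _.
  by rewrite hcompzr kappaU_pow_degen_eq0 // mul0rz.
rewrite hcompA -[hcomp _ (bS M m.+1)](@mulrz_sgnK _ _ m.+1) -bS_kappaU_pow hcompzl -hcompA.
rewrite dpartS compDr K_dpart add0r hcompzr kappaU_pow_degen // subnn hcompzr.
by rewrite hcompA bS_degen0 hcompNl -hcompA bS_sub_face0_kappaU_pow hcomp0r oppr0 !mul0rz.
Qed.

Lemma piDK_eq n : piDK M n =
  endo_pow (kappa M n) n - hcomp (hcomp (bS M n) (dd M n)) (endo_pow (kappa M n) n).
Proof.
case: n => [|m]; first by rewrite /piDK /= comp1m compm1 mulrz_sgn0 bd0 subKr.
rewrite -hcompA dd_kappa_pow hcompA bS_kappa_pow -hcompA.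
rewrite !kappa_sgn endo_powMz sgn_exp_self piDK_kappaU dd_dpart dpartS.
hcomp_expand; rewrite kappaU_pow_bS_dpart; hcomp_expand; rewrite compm1; abel.
Qed.

Lemma connesB_homotopy n :
  hcomp (bS M n) (connesB M n) + Bb_low M n = idm (Mo M n) - piDK M n.
Proof.
case: n => [|m].
  by rewrite /connesB big_ord1 /= compm1 addr0 piDK_eq /= !compm1; abel.
rewrite /= /connesB hcomp_sumr hcomp_suml.
under eq_bigr do rewrite hcompA.
under [in X in _ + X = _]eq_bigr do rewrite -hcompA -bS_kappa_pow hcompA.
have homotopy_sum :
    \sum_(i < m.+1) hcomp (hcomp (bS M m.+1) (dd M m.+1)) (endo_pow (kappa M m.+1) i) +
    \sum_(i < m.+1) hcomp (hcomp (dd M m) (bS M m)) (endo_pow (kappa M m.+1) i) =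
    idm _ - endo_pow (kappa M m.+1) m.+1.
  rewrite -big_split -sum_endo_pow_telescope /=.
  by apply: eq_bigr => i _; rewrite -compDl bd_add_db.
rewrite big_ord_recr [X in endo_pow _ X]/= addrAC homotopy_sum piDK_eq; abel.
Qed.

Lemma connesB_connesB n : hcomp (connesB M n.+1) (connesB M n) = 0.
Proof.
rewrite /connesB hcomp_suml big1 // => i _; rewrite hcomp_sumr big1 // => j _.
by rewrite -hcompA [hcomp (endo_pow _ i) _]hcompA -dd_kappa_pow -hcompA hcompA dd_dd hcomp0l.
Qed.

End Duplicial.

Theorem mainTheorem17 (A : preadditive) (M : duplicial A) (n : nat) :
  hcomp (bS M n) (connesB M n) + Bb_low M n = idm (Mo M n) - piDK M n /\
  hcomp (connesB M n.+1) (connesB M n) = 0.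
Proof. by split; [exact: connesB_homotopy | exact: connesB_connesB]. Qed.
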